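(* Let $\mathcal{G}=(\mathcal{V},\mathcal{A})$ be the information-flow graph of a single-sender single-uniprior index-coding instance with message lengths $q_1,\dots,q_n$. Then \[ \ell^*(\mathcal{G}) = \sum_{k \in \mathcal{V}} q_k - \sum_{i \in \mathcal{L}(\mathcal{G})} q_i - \sum_{\mathcal{V}_{S} \in \mathbb{V}} \min_{a \in \mathcal{V}_{S}} q_a, \] where $\mathbb{V}$ is the set of vertex sets of all leaf SCCs of $\mathcal{G}$. Furthermore, this optimal length is achieved by a linear index code, i.e., one whose encoding function is linear over $\mathrm{GF}(2)$ (each codeword bit is an XOR of message bits).
   Context: Single-sender single-uniprior index coding: there are $n$ receivers and $n$ independent messages $x_1,\dots,x_n$; message $x_i$ consists of $q_i\ge 1$ bits, each independently uniformly distributed on $\{0,1\}$. A single sender knows all messages. Receiver $i$ knows $x_i$ a priori and requests a set $\mathcal{W}_i$ of messages with $x_i\notin\mathcal{W}_i$. The information-flow graph is the directed graph $\mathcal{G}=(\mathcal{V},\mathcal{A})$ with $\mathcal{V}=\{1,\dots,n\}$ and an arc $(j\to i)\in\mathcal{A}$ iff $x_j\in\mathcal{W}_i$. An index code of length $\ell$ consists of an encoding function $E:\{0,1\}^{\sum_i q_i}\to\{0,1\}^\ell$ and, for each receiver $i$, a decoding function $D_i$ such that $D_i(E(x_1,\dots,x_n),x_i)$ equals the tuple of messages in $\mathcal{W}_i$ for all values of the messages. $\ell^*(\mathcal{G})$ denotes the minimum length of an index code. A leaf vertex is a vertex with no outgoing arcs; $\mathcal{L}(\mathcal{G})$ is the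 set of leaf vertices. A strongly connected component (SCC) is a maximal subgraph in which every ordered pair of vertices is joined by a directed path inside the subgraph. A leaf SCC is an SCC with at least two vertices from which no arc goes to a vertex outside the SCC. *)

From mathcomp Require Import all_boot.
Set Implicit Arguments. Unset Strict Implicit. Unset Printing Implicit Defensive.

Section IndexCoding.
Variables (n : nat) (q : 'I_n -> nat) (W : 'I_n -> {set 'I_n}).

Definition msgs := forall i : 'I_n, {ffun 'I_(q i) -> bool}.

Definition arc : rel 'I_n := fun j i => j \in W i.

Definition is_index_code (l : nat) (E : msgs -> {ffun 'I_l -> bool}) : Prop :=
  exists D : forall i : 'I_n, {ffun 'I_l -> bool} -> {ffun 'I_(q i) -> bool} ->
               forall j : 'I_n, {ffun 'I_(q j) -> bool},
    forall (x : msgs) (i j : 'I_n), j \in W i -> D i (E x) (x i) j = x j.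

Definition is_linear_code (l : nat) (E : msgs -> {ffun 'I_l -> bool}) : Prop :=
  exists c : 'I_l -> forall j : 'I_n, 'I_(q j) -> bool,
    forall (x : msgs) (k : 'I_l),
      E x k = \big[addb/false]_(j < n) \big[addb/false]_(b < q j) (c k j b && x j b).

Definition leaf (i : 'I_n) : bool := [forall j, ~~ arc i j].

Definition strongly_connected (S : {set 'I_n}) : bool :=
  [forall u in S, forall v in S,
     connect (fun a b => [&& arc a b, a \in S & b \in S]) u v].

Definition is_SCC (S : {set 'I_n}) : bool :=
  maxset (fun T : {set 'I_n} => (T != set0) && strongly_connected T) S.

Definition leaf_SCC (S : {set 'I_n}) : bool :=
  [&& is_SCC S, 1 < #|S| &
      [forall u in S, forall v, arc u v ==> (v \in S)]].

(* minimum of q over a (nonempty) set S; the identity element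
   \max_k q k is >= every q a, so this is the true minimum when S != set0 *)
Definition minq (S : {set 'I_n}) : nat :=
  \big[minn/(\max_(k < n) q k)]_(a in S) q a.

Definition opt_length : nat :=
  \sum_(k < n) q k - \sum_(i < n | leaf i) q i
  - \sum_(S : {set 'I_n} | leaf_SCC S) minq S.

End IndexCoding.

From Pilot Require Import Defs.
From mathcomp Require Import all_boot.
From Stdlib Require Import ClassicalEpsilon.
Set Implicit Arguments. Unset Strict Implicit. Unset Printing Implicit Defensive.

(* Call the hub of a leaf SCC one of its vertices with the shortest message,
   and a vertex coded when it is neither a leaf nor a hub; the claimed length
   is the total length of the coded messages.
   Lower bound: an arc a -> b means that receiver b decodes x_a, so two message
   tuples with the same codeword that agree at some vertex t agree at every
   vertex from which t is reachable.  Every vertex reaches a leaf or (through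
   its leaf SCC) a hub, so once the uncoded messages are fixed the codeword
   determines all coded bits.
   Upper bound: send each bit of a coded message, XORed with the bit at the
   same position of the hub message of its leaf SCC when that bit exists.  A
   receiver in a leaf SCC S (which contains everything it requests) recovers
   the whole hub message from its own bits, since the hub message is the
   shortest in S, and then every message of S; bits outside leaf SCCs are sent
   in the clear. *)

Section StrongComponents.
Variables (n : nat) (W : 'I_n -> {set 'I_n}).
Local Notation arc := (Defs.arc W).

Definition arc_in (S : {set 'I_n}) : rel 'I_n :=
  fun a b => [&& arc a b, a \in S & b \in S].

Lemma connect_arc_in_subset (S T : {set 'I_n}) :
  S \subset T -> subrel (connect (arc_in S)) (connect (arc_in T)).
Proof.
move=> sST; apply: connect_sub => a b /and3P[ab aS bS].
by apply: connect1; rewrite /arc_in ab !(subsetP sST).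
Qed.

Lemma connect_arc_in S : subrel (connect (arc_in S)) (connect arc).
Proof. by apply: connect_sub => a b /and3P[ab _ _]; apply: connect1. Qed.

Lemma closed_connect_arc_in (C : {set 'I_n}) a b :
  (forall x y, x \in C -> arc x y -> y \in C) ->
  a \in C -> connect arc a b -> connect (arc_in C) a b.
Proof.
move=> closedC + /connectP[p pa ->]; elim: p a pa => [|y p IHp] a //= /andP[ay pa] aC.
have yC := closedC _ _ aC ay.
by apply: connect_trans (IHp y pa yC); apply: connect1; rewrite /arc_in ay aC yC.
Qed.

Lemma strongly_connectedP S u v :
  strongly_connected W S -> u \in S -> v \in S -> connect (arc_in S) u v.
Proof. by move=> /forall_inP scS uS vS; have /forall_inP := scS u uS; apply. Qed.

Lemma strongly_connectedU (S T : {set 'I_n}) x :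
  strongly_connected W S -> strongly_connected W T -> x \in S -> x \in T ->
  strongly_connected W (S :|: T).
Proof.
move=> scS scT xS xT.
have viaU u : u \in S :|: T ->
    connect (arc_in (S :|: T)) u x /\ connect (arc_in (S :|: T)) x u.
  case/setUP=> uX; [have sub := subsetUl S T | have sub := subsetUr S T];
    by split; apply: (connect_arc_in_subset sub); apply: strongly_connectedP.
apply/forall_inP => u /viaU[ux _]; apply/forall_inP => v /viaU[_ xv].
exact: connect_trans ux xv.
Qed.

Lemma SCC_mem_eq (S T : {set 'I_n}) x :
  is_SCC W S -> is_SCC W T -> x \in S -> x \in T -> S = T.
Proof.
move=> /maxsetP[/andP[_ scS] maxS] /maxsetP[/andP[_ scT] maxT] xS xT.
have scU : (S :|: T != set0) && strongly_connected W (S :|: T).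
  by rewrite (strongly_connectedU scS scT xS xT) andbT; apply/set0Pn; exists x; rewrite inE xS.
by rewrite -(maxS _ scU (subsetUl _ _)) (maxT _ scU (subsetUr _ _)).
Qed.

Lemma leaf_SCC_SCC S : leaf_SCC W S -> is_SCC W S.
Proof. by case/and3P. Qed.

Lemma leaf_SCC_sc S : leaf_SCC W S -> strongly_connected W S.
Proof. by case/and3P => /maxsetp/andP[]. Qed.

Lemma leaf_SCC_neq0 S : leaf_SCC W S -> S != set0.
Proof. by case/and3P => _ S2 _; rewrite -card_gt0 (ltn_trans _ S2). Qed.

Lemma leaf_SCC_closed S u v : leaf_SCC W S -> u \in S -> arc u v -> v \in S.
Proof. by case/and3P => _ _ /forall_inP closedS /closedS/forallP/(_ v)/implyP. Qed.

Lemma leaf_SCC_nonleaf S u : leaf_SCC W S -> u \in S -> ~~ leaf W u.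
Proof.
move=> leafS uS; case/and3P: (leafS) => _ /card_gt1P[a [b [aS bS ab]]] _.
have [w wS uw] : exists2 w, w \in S & u != w.
  by case: (eqVneq u a) => [->|]; [exists b | exists a].
have /connectP[[|y p] /= pu wE] := strongly_connectedP (leaf_SCC_sc leafS) uS wS.
  by rewrite wE eqxx in uw.
by case/andP: pu => /and3P[uy _ _] _; apply/forallPn; exists y; rewrite negbK.
Qed.

Definition reach_set t := [set w | connect arc t w].

Hypothesis arc_irrefl : forall i, i \notin W i.

Lemma terminal_leaf_SCC t :
  {in reach_set t, forall u, connect arc u t} -> ~~ leaf W t ->
  leaf_SCC W (reach_set t).
Proof.
move=> back /forallPn[j]; rewrite negbK => tj.
have tR : t \in reach_set t by rewrite inE connect0.
have closedR x y : x \in reach_set t -> arc x y -> y \in reach_set t.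
  by rewrite !inE => tx xy; apply: connect_trans tx (connect1 xy).
have scR : strongly_connected W (reach_set t).
  apply/forall_inP => u uR; apply/forall_inP => w; rewrite inE => tw.
  exact: closed_connect_arc_in closedR uR (connect_trans (back u uR) tw).
apply/and3P; split.
- apply/maxsetP; split; first by rewrite scR andbT; apply/set0Pn; exists t.
  move=> B /andP[_ scB] sRB; apply/eqP; rewrite eqEsubset sRB andbT.
  apply/subsetP => b bB; rewrite inE.
  exact: connect_arc_in (strongly_connectedP scB (subsetP sRB t tR) bB).
- apply/card_gt1P; exists t, j; split=> //; first by rewrite inE connect1.
  by apply: contraNneq _ (arc_irrefl t) => eq_tj; move: tj; rewrite -eq_tj.
- by apply/forall_inP => u uR; apply/forallP => w; apply/implyP; apply: closedR.
Qed.

Lemma connect_to_sink v :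
  exists2 t, connect arc v t & leaf W t \/ exists2 S, leaf_SCC W S & t \in S.
Proof.
have [t vt minR] := arg_minnP (fun t => #|reach_set t|) (connect0 arc v).
exists t => //; have [|nleaf_t] := boolP (leaf W t); [by left | right].
exists (reach_set t); last by rewrite inE connect0.
apply: terminal_leaf_SCC nleaf_t => u; rewrite inE => tu.
have sRut : reach_set u \subset reach_set t.
  by apply/subsetP => w; rewrite !inE; apply: connect_trans.
have /eqP eqR : reach_set u == reach_set t.
  by rewrite eqEcard sRut minR //; apply: connect_trans vt tu.
have : t \in reach_set u by rewrite eqR inE connect0.
by rewrite inE.
Qed.

End StrongComponents.

Lemma big_tagged (R : Type) (idx : R) (op : Monoid.com_law idx)
    (I : finType) (J : I -> finType) (G : {i : I & J i} -> R) :
  \big[op/idx]_i \big[op/idx]_(b : J i) G (Tagged J b) =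
  \big[op/idx]_(p : {i : I & J i}) G p.
Proof. by rewrite sig_big_dep; apply: eq_bigr => -[]. Qed.

Lemma big_addb_pair (T : finType) (y : T -> bool) (p0 : T) (o : option T) :
  o != Some p0 ->
  \big[addb/false]_(p : T) (((p == p0) || (Some p == o)) && y p) =
  y p0 (+) oapp y false o.
Proof.
move=> o_p0; rewrite (bigD1 p0) //= eqxx /=; case: o o_p0 => [p1|] /= p1_p0.
  have p0_p1 : p1 != p0 by apply: contraNneq p1_p0 => ->.
  rewrite (bigD1 p1) //= eqxx orbT /= big1 ?addbF // => p /andP[pp0 pp1].
  by rewrite (negbTE pp0) /= (inj_eq Some_inj) (negbTE pp1).
by rewrite big1 ?addbF // => p pp0; rewrite (negbTE pp0).
Qed.

Section IndexCodes.
Variables (n : nat) (q : 'I_n -> nat) (W : 'I_n -> {set 'I_n}).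
Local Notation arc := (Defs.arc W).

Definition decodable l (E : msgs q -> {ffun 'I_l -> bool}) : Prop :=
  forall (x x' : msgs q) i j, j \in W i -> E x = E x' -> x i = x' i -> x j = x' j.

Lemma index_codeP l (E : msgs q -> {ffun 'I_l -> bool}) :
  is_index_code W E <-> decodable E.
Proof.
split=> [[D decD] x x' i j ji Ex xi | decE]; first by rewrite -(decD x i j) // Ex xi decD.
have inh : inhabited (msgs q) by constructor => v; exact: [ffun=> false].
exists (fun i c y => epsilon inh (fun x => E x = c /\ x i = y)) => x i j ji.
have [] := epsilon_spec inh (fun x' => E x' = E x /\ x' i = x i)
  (ex_intro _ x (conj erefl erefl)).
exact: decE.
Qed.

Lemma decodable_connect l (E : msgs q -> {ffun 'I_l -> bool}) x x' v t :
  decodable E -> E x = E x' -> connect arc v t -> x t = x' t -> x v = x' v.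
Proof.
move=> decE Ex /connectP[p + ->]; elim: p v => [|w p IHp] v //= /andP[vw pw] xt.
exact: decE vw Ex (IHp w pw xt).
Qed.

Definition bit_index := {i : 'I_n & 'I_(q i)}.
Definition bitpos v (b : 'I_(q v)) : bit_index := Tagged (fun i => 'I_(q i)) b.
Definition bits_in (F : {set 'I_n}) := [set p : bit_index | tag p \in F].

Lemma card_bits_in F : #|bits_in F| = \sum_(v in F) q v.
Proof.
rewrite -sum1_card big_mkcond /= -big_tagged [RHS]big_mkcond /=.
apply: eq_bigr => v _; under eq_bigr => b _ do rewrite inE /=.
by case: (v \in F); [rewrite sum1_card card_ord | rewrite big1].
Qed.

Lemma decodable_length (F : {set 'I_n}) l (E : msgs q -> {ffun 'I_l -> bool}) :
  decodable E -> (forall v, exists2 t, connect arc v t & t \notin F) ->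
  \sum_(v in F) q v <= l.
Proof.
move=> decE sink; rewrite -card_bits_in.
pose emb (z : {ffun bit_index -> bool}) : msgs q :=
  fun v => [ffun b => z (bitpos b)].
have emb_out z v : z \in pffun_on false (bits_in F) predT -> v \notin F ->
    emb z v = [ffun=> false].
  case/pffun_onP => suppz _ vF; apply/ffunP => b; rewrite !ffunE.
  apply: contraNF vF => zb; have := subsetP suppz (bitpos b).
  by rewrite !inE zb; apply.
have inj_code : {in pffun_on false (bits_in F) predT &, injective (E \o emb)}.
  move=> z z' zF z'F Ez; apply/ffunP => -[v b].
  have [t vt tF] := sink v.
  have agree_t : emb z t = emb z' t by rewrite !emb_out.
  have := decodable_connect decE Ez vt agree_t.
  by move/ffunP/(_ b); rewrite !ffunE.
rewrite -(leq_exp2l _ _ (isT : 1 < 2)).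
have := max_card (mem ((E \o emb) @: pffun_on false (bits_in F) predT)).
by rewrite card_in_imset // card_pffun_on card_ffun !card_bool card_ord.
Qed.

End IndexCodes.

Section OptimalCode.
Variables (n : nat) (q : 'I_n -> nat) (W : 'I_n -> {set 'I_n}).
Hypothesis arc_irrefl : forall i, i \notin W i.

Lemma minq_le (S : {set 'I_n}) a : a \in S -> minq q S <= q a.
Proof.
rewrite /minq => aS; set M := \max_(k < n) q k.
have : a \in index_enum 'I_n by rewrite mem_index_enum.
elim: (index_enum 'I_n) => [|b r IHr] //; rewrite inE big_cons.
case/orP => [/eqP <-|ar]; first by rewrite aS geq_minl.
by case: ifP => _; [apply: leq_trans (geq_minr _ _) (IHr ar) | apply: IHr].
Qed.

Lemma minq_attained (S : {set 'I_n}) : S != set0 -> exists2 a, a \in S & q a = minq q S.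
Proof.
case/set0Pn => a0 a0S.
have [minq_max|//] :
    minq q S = \max_(k < n) q k \/ exists2 a, a \in S & q a = minq q S.
  rewrite /minq; elim/big_ind: _ => [|x y|a aS]; [by left | | by right; exists a].
  by rewrite /minn; case: ifP.
exists a0 => //; apply/eqP; rewrite eqn_leq minq_le // andbT minq_max.
exact: leq_bigmax.
Qed.

Variable v0 : 'I_n.

(* The default [v0] is never returned on a leaf SCC, which is nonempty. *)
Definition hub (S : {set 'I_n}) : 'I_n := odflt v0 [pick a in S | q a == minq q S].

Lemma hub_spec S : S != set0 -> hub S \in S /\ q (hub S) = minq q S.
Proof.
move=> S0; rewrite /hub; case: pickP => [a /andP[aS /eqP ->] // | noa].
by have [a aS qa] := minq_attained S0; move: (noa a); rewrite aS qa eqxx.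
Qed.

Definition hubs := hub @: [set S | leaf_SCC W S].
Definition coded := ~: ([set v | leaf W v] :|: hubs).

Lemma hub_inj : {in [set S | leaf_SCC W S] &, injective hub}.
Proof.
move=> S T; rewrite !inE => leafS leafT eq_hub.
have [hubS _] := hub_spec (leaf_SCC_neq0 leafS).
have [hubT _] := hub_spec (leaf_SCC_neq0 leafT).
by apply: SCC_mem_eq (leaf_SCC_SCC leafS) (leaf_SCC_SCC leafT) hubS _; rewrite eq_hub.
Qed.

Lemma hubsP v : v \in hubs -> exists2 S, leaf_SCC W S & v = hub S /\ v \in S.
Proof.
case/imsetP => S; rewrite inE => leafS ->; exists S => //.
by have [] := hub_spec (leaf_SCC_neq0 leafS).
Qed.

Lemma hub_mem S : leaf_SCC W S -> hub S \in hubs.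
Proof. by move=> leafS; apply: imset_f; rewrite inE. Qed.

Lemma mem_coded v : (v \in coded) = ~~ leaf W v && (v \notin hubs).
Proof. by rewrite !inE negb_or. Qed.

Lemma opt_length_coded : opt_length q W = \sum_(v in coded) q v.
Proof.
have sum_hubs : \sum_(S | leaf_SCC W S) minq q S = \sum_(a in hubs) q a.
  rewrite big_imset; last exact: hub_inj.
  apply: eq_big => S; first by rewrite inE.
  by move=> leafS; have [] := hub_spec (leaf_SCC_neq0 leafS).
rewrite /opt_length sum_hubs (bigID (leaf W)) /= (bigID (mem hubs) (fun v => ~~ leaf W v)) /=.
have -> : \sum_(v | ~~ leaf W v && (v \in hubs)) q v = \sum_(a in hubs) q a.
  apply: eq_bigl => v; apply: andb_idl => /hubsP[S leafS [-> hubS]].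
  exact: leaf_SCC_nonleaf leafS hubS.
have -> : \sum_(v | ~~ leaf W v && (v \notin hubs)) q v = \sum_(v in coded) q v.
  by apply: eq_bigl => v; rewrite mem_coded.
by rewrite !addKn.
Qed.

Lemma opt_length_min l (E : msgs q -> {ffun 'I_l -> bool}) :
  is_index_code W E -> opt_length q W <= l.
Proof.
move/index_codeP => decE; rewrite opt_length_coded; apply: (decodable_length decE) => v.
have [t vt [leaf_t | [S leafS tS]]] := connect_to_sink arc_irrefl v.
  by exists t; rewrite // mem_coded leaf_t.
have [hubS _] := hub_spec (leaf_SCC_neq0 leafS).
exists (hub S); last by rewrite mem_coded hub_mem ?andbF.
exact: connect_trans vt (connect_arc_in (strongly_connectedP (leaf_SCC_sc leafS) tS hubS)).
Qed.

Lemma coded_leaf_SCC S v : leaf_SCC W S -> v \in S -> v != hub S -> v \in coded.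
Proof.
move=> leafS vS v_hub; rewrite mem_coded (leaf_SCC_nonleaf leafS vS) /=.
apply: contra v_hub => /hubsP[T leafT [eq_v vT]].
by rewrite eq_v (SCC_mem_eq (leaf_SCC_SCC leafT) (leaf_SCC_SCC leafS) vT vS).
Qed.

Definition leaf_SCC_of v := [pick S | leaf_SCC W S && (v \in S)].

Variant leaf_SCC_of_spec v : option {set 'I_n} -> Type :=
  | InLeafSCC S of leaf_SCC W S & v \in S : leaf_SCC_of_spec v (Some S)
  | NotInLeafSCC : leaf_SCC_of_spec v None.

Lemma leaf_SCC_ofP v : leaf_SCC_of_spec v (leaf_SCC_of v).
Proof. by rewrite /leaf_SCC_of; case: pickP => [S /andP[]|_]; constructor. Qed.

Lemma leaf_SCC_of_mem S v : leaf_SCC W S -> v \in S -> leaf_SCC_of v = Some S.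
Proof.
move=> leafS vS; rewrite /leaf_SCC_of; case: pickP => [T /andP[leafT vT]|noS].
  by rewrite (SCC_mem_eq (leaf_SCC_SCC leafT) (leaf_SCC_SCC leafS) vT vS).
by move: (noS S); rewrite leafS vS.
Qed.

Definition partner (p : bit_index q) : option (bit_index q) :=
  if leaf_SCC_of (tag p) is Some C then omap (@bitpos n q (hub C)) (insub (val (tagged p)))
  else None.

Definition msg_bit (x : msgs q) (p : bit_index q) : bool := x (tag p) (tagged p).
Definition partner_bit (x : msgs q) p : bool := oapp (msg_bit x) false (partner p).

Definition coded_bits := bits_in q coded.

Lemma card_coded_bits : #|coded_bits| = opt_length q W.
Proof. by rewrite card_bits_in opt_length_coded. Qed.

Definition coded_bit (k : 'I_(opt_length q W)) : bit_index q :=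
  enum_val (cast_ord (esym card_coded_bits) k).

Definition code_coef k j (b : 'I_(q j)) : bool :=
  (bitpos b == coded_bit k) || (Some (bitpos b) == partner (coded_bit k)).

Definition code (x : msgs q) : {ffun 'I_(opt_length q W) -> bool} :=
  [ffun k => \big[addb/false]_(j < n) \big[addb/false]_(b < q j) (code_coef k b && x j b)].

Lemma code_linear : is_linear_code code.
Proof. by exists code_coef => x k; rewrite ffunE. Qed.

Lemma partner_neq p : p \in coded_bits -> partner p != Some p.
Proof.
rewrite inE mem_coded /partner => /andP[_ p_nonhub].
case: leaf_SCC_ofP => [S leafS _|] //; case: insubP => //= b _ _.
by apply: contraNneq p_nonhub => -[<-]; apply: hub_mem.
Qed.

Lemma codeE x k : code x k = msg_bit x (coded_bit k) (+) partner_bit x (coded_bit k).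
Proof.
rewrite ffunE (big_tagged _ (fun p =>
  ((p == coded_bit k) || (Some p == partner (coded_bit k))) && msg_bit x p)).
by rewrite big_addb_pair ?partner_neq ?enum_valP.
Qed.

Lemma code_agree x x' p : code x = code x' -> p \in coded_bits ->
  msg_bit x p (+) partner_bit x p = msg_bit x' p (+) partner_bit x' p.
Proof.
move=> Ex pC; have [k <-] : exists k, coded_bit k = p.
  exists (cast_ord card_coded_bits (enum_rank_in pC p)).
  by rewrite /coded_bit cast_ordK enum_rankK_in.
by rewrite -!codeE Ex.
Qed.

Lemma partner_bit_agree x x' p :
  (forall S, leaf_SCC W S -> tag p \in S -> x (hub S) = x' (hub S)) ->
  partner_bit x p = partner_bit x' p.
Proof.
rewrite /partner_bit /partner => hub_x; case: leaf_SCC_ofP => [S leafS pS|] //.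
by case: insubP => //= b _ _; rewrite /msg_bit /= (hub_x S leafS pS).
Qed.

Lemma coded_msg_agree x x' v : code x = code x' -> v \in coded ->
  (forall S, leaf_SCC W S -> v \in S -> x (hub S) = x' (hub S)) -> x v = x' v.
Proof.
move=> Ex vC hub_x; apply/ffunP => b.
have := code_agree Ex (_ : bitpos b \in coded_bits); rewrite inE => /(_ vC).
by rewrite (partner_bit_agree (p := bitpos b) hub_x) => /addIb.
Qed.

Lemma hub_msg_agree x x' S i : code x = code x' -> leaf_SCC W S -> i \in S ->
  x i = x' i -> x (hub S) = x' (hub S).
Proof.
move=> Ex leafS iS xi; have [hubS q_hub] := hub_spec (leaf_SCC_neq0 leafS).
have [<- //|i_hub] := eqVneq i (hub S).
have le_hub_i : q (hub S) <= q i by rewrite q_hub minq_le.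
apply/ffunP => b; have := code_agree Ex (_ : bitpos (widen_ord le_hub_i b) \in coded_bits).
rewrite inE (coded_leaf_SCC leafS iS i_hub) => /(_ isT).
rewrite /partner_bit /partner /= (leaf_SCC_of_mem leafS iS).
case: insubP => [c _ val_c|]; last by rewrite /= ltn_ord.
have -> : c = b by apply: val_inj.
by rewrite /msg_bit /= xi => /addbI.
Qed.

Lemma code_decodable : decodable W code.
Proof.
move=> x x' i j ji Ex xi.
have hub_x S : leaf_SCC W S -> j \in S -> x (hub S) = x' (hub S).
  by move=> leafS jS; apply: hub_msg_agree Ex leafS (leaf_SCC_closed leafS jS ji) xi.
have [jC|] := boolP (j \in coded); first exact: coded_msg_agree Ex jC hub_x.
rewrite mem_coded negb_and !negbK => /orP[/forallP/(_ i)/negP[] //|].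
by case/hubsP => S leafS [eq_j jS]; rewrite eq_j; apply: hub_x.
Qed.

End OptimalCode.

Theorem theorem3 (n : nat) (q : 'I_n -> nat) (W : 'I_n -> {set 'I_n}) :
  (forall i, 0 < q i) ->
  (forall i, i \notin W i) ->
  (* the optimal length is attained by a linear index code ... *)
  (exists E : msgs q -> {ffun 'I_(opt_length q W) -> bool},
      is_index_code W E /\ is_linear_code E) /\
  (* ... and no index code is shorter *)
  (forall (l : nat) (E : msgs q -> {ffun 'I_l -> bool}),
      is_index_code W E -> opt_length q W <= l).
Proof.
case: n q W => [|n] q W _ arc_irrefl.
  split=> [|l E _]; last by rewrite /opt_length big_ord0.
  exists (fun _ => [ffun=> false]); split; first by apply/index_codeP => x x' [].
  by exists (fun _ _ _ => false) => x k; rewrite ffunE big_ord0.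
split=> [|l E]; last exact: (opt_length_min arc_irrefl ord0).
exists (code W ord0); split; last exact: code_linear.
by apply/index_codeP; apply: code_decodable.
Qed.
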